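(* Let $T$ be a plane labelled bipartite tree with $n$ white and $m$ black vertices, where $n+m$ is even. Fix a white vertex $v_i$ as root vertex. Then the value $i(T)\in\{0,1\}$, computed from the string $c(T)$ built with root vertex $v_i$ and root edge $e$, is the same for every choice of the root edge $e$ among the edges incident to $v_i$.
   Context: A plane labelled bipartite tree with $n$ white and $m$ black vertices is defined as follows. It is a finite tree embedded in the oriented plane, considered up to orientation-preserving homeomorphism. Its vertices are colored white and black so that adjacent vertices have different colors. The white vertices carry the distinct labels $v_1,\dots,v_n$ and the black vertices the distinct labels $u_1,\dots,u_m$. String $c(T)$: choose a white vertex $v_i$ (the root vertex) and an edge $e$ incident to it (the root edge). Walk counterclockwise around $T$, i.e. perform the contour walk around the tree keeping the tree on the left, starting at $v_i$ and first traversing $e$, until returning to $v_i$ after all edges have been traversed twice. Whenever a vertex is met for the first time, write its label. Whenever a vertex is met for the last time, write a closing bracket '')''. For example, for the path $v_1-u_1-v_2-u_2$ rooted at $v_1$, $c(T)=v_1u_1v_2u_2))))$. The string contains $n+m$ labels and $n+m$ brackets. Invariant: let - $a$ be the number of pairs of white labels $v_k,v_l$ with $v_k$ occurring before $v_l$ in $c(T)$ and $k>l$; - $b$ be the analogous number of inversions among black labels $u_k$; - $c$ be the number of pairs (black label $u$, white label $v$) with $u$ occurring before $v$ in $c(T)$; - $d$ be the number of pairs (closing bracket, label) with the bracket occurring before the label in $c(T)$; - $e_0=|n-m|/2$. Then $i(T)\in\{0,1\}$ is defined by $i(T)\equiv a+b+c+\tfrac{d+e_0}{2}\pmod 2$.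 The tree is called even if $i(T)=0$ and odd if $i(T)=1$. *)

From mathcomp Require Import all_boot.
Set Implicit Arguments. Unset Strict Implicit. Unset Printing Implicit Defensive.

(* A plane labelled bipartite tree is encoded as a combinatorial map on a
   finite set of darts D (each edge = two darts):
   - [alpha] : fixed-point-free involution exchanging the two darts of an edge;
   - [sigma] : rotation, sending a dart to the next dart (counterclockwise)
     around its origin vertex;
   - [vert d] : the label of the origin vertex of d, white labels [inl k]
     (v_(k+1), k : 'I_n) and black labels [inr k] (u_(k+1), k : 'I_m).
   Vertices are the sigma-orbits; a connected map with #V = #E + 1 is a tree,
   and its embedding is planar (Euler: one face, genus 0). *)

Definition is_white n m (x : 'I_n + 'I_m) : bool :=
  if x is inl _ then true else false.

Definition is_plane_btree (n m : nat) (D : finType) (sigma alpha : D -> D)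
    (vert : D -> 'I_n + 'I_m) : Prop :=
  [/\ injective sigma,
      (forall d, alpha (alpha d) = d /\ alpha d != d),
      (forall d, vert (sigma d) = vert d) &
   [/\
      (forall d d', vert d = vert d' -> fconnect sigma d d'),
      (forall x, exists d, vert d = x),
      (forall d, is_white (vert (alpha d)) = ~~ is_white (vert d)),
      (forall d d', connect (fun x y => (y == sigma x) || (y == alpha x)) d d')
    & n + m = (#|D|)./2 + 1]].

Section Contour.
Variables (n m : nat) (D : finType) (sigma alpha : D -> D)
          (vert : D -> 'I_n + 'I_m).

(* Contour walk starting with dart d0 (root vertex vert d0, root edge the edge
   of d0): after traversing dart d we arrive at vert (alpha d) and continue
   with the next dart sigma (alpha d). *)
Definition walk_darts (d0 : D) : seq D :=
  traject (fun d => sigma (alpha d)) d0 #|D|.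

Definition walk_visits (d0 : D) : seq ('I_n + 'I_m) :=
  vert d0 :: [seq vert (alpha d) | d <- walk_darts d0].

(* the string c(T): [Some x] = label x, [None] = closing bracket ")" *)
Definition cstring (d0 : D) : seq (option ('I_n + 'I_m)) :=
  let s := walk_visits d0 in
  flatten [seq let x := nth (vert d0) s p in
               (if x \notin take p s then [:: Some x] else [::]) ++
               (if x \notin drop p.+1 s then [:: None] else [::])
          | p <- iota 0 (size s)].

Definition count_pairs (f : option ('I_n + 'I_m) -> option ('I_n + 'I_m) -> bool)
    (s : seq (option ('I_n + 'I_m))) : nat :=
  \sum_(q < size s) \sum_(p < q) f (nth None s p) (nth None s q).

Definition inv_white (x y : option ('I_n + 'I_m)) : bool :=
  match x, y with Some (inl k), Some (inl l) => l < k | _, _ => false end.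
Definition inv_black (x y : option ('I_n + 'I_m)) : bool :=
  match x, y with Some (inr k), Some (inr l) => l < k | _, _ => false end.
Definition black_white (x y : option ('I_n + 'I_m)) : bool :=
  match x, y with Some (inr _), Some (inl _) => true | _, _ => false end.
Definition bracket_label (x y : option ('I_n + 'I_m)) : bool :=
  match x, y with None, Some _ => true | _, _ => false end.

Definition iT (d0 : D) : bool :=
  let s := cstring d0 in
  let a := count_pairs inv_white s in
  let b := count_pairs inv_black s in
  let c := count_pairs black_white s in
  let d := count_pairs bracket_label s in
  let e0 := (n - m + (m - n))./2 in
  odd (a + b + c + (d + e0)./2).

End Contour.

From mathcomp Require Import all_boot.
From mathcomp Require Import fingroup perm zify.
Set Implicit Arguments. Unset Strict Implicit. Unset Printing Implicit Defensive.

(* The contour walk from a dart d is the orbit of d under the face permutation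
   sigma \o alpha. For any permutation s and involution a with e 2-cycles, the
   genus inequality  z(s) + z(a s) <= e + 2 c(s, a)  holds (z = number of cycles,
   c = number of components); for a tree (z(sigma) = e + 1, c = 1) it forces a
   single face, so the walk from any dart visits every dart.
   Now let d0 and d1 be two darts at the root vertex v, d1 coming k steps after
   d0 in the walk.  The two arcs of the walk between consecutive visits to v meet
   only in v: otherwise splitting v into two vertices, one per arc, would give a
   connected map with one more vertex and two faces, violating the inequality.
   Hence the string for d0 reads  v X Y )  and the one for d1 reads  v Y X ),
   where X and Y are balanced words on disjoint sets of labels.  The exchange
   does not change d and changes a + b + c by |X| |Y| modulo 2; since
   |X| + |Y| = n + m - 1 is odd, |X| |Y| is even. *)

Section EulerInequality.
Variable T : finType.
Implicit Types (s a : {perm T}) (x y z : T).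

Definition hmap_rel s a : rel T := relU (frel s) (frel a).

Lemma hmap_rel_sym s a : connect_sym (hmap_rel s a).
Proof. by apply: relU_sym => x y; apply: fconnect_sym; exact: perm_inj. Qed.

Lemma porbit_fconnect s x y : (y \in porbit s x) = fconnect s x y.
Proof.
apply/porbitP/idP => [[i ->]|/iter_findex <-]; first by rewrite permX fconnect_iter.
by exists (findex s x y); rewrite permX.
Qed.

Lemma connect_hmap_step s a x : connect (hmap_rel s a) x ((a * s)%g x).
Proof.
rewrite permM; apply: (connect_trans (y := a x)); apply: connect1;
  by rewrite /hmap_rel /= eqxx ?orbT.
Qed.

Lemma connect_hmap_porbit s a x y :
  y \in porbit (a * s) x -> connect (hmap_rel s a) x y.
Proof.
rewrite porbit_fconnect; apply: connect_sub => u v /eqP<-.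
exact: connect_hmap_step.
Qed.

Lemma card_porbits_le_n_comp s : #|porbits s| <= n_comp (hmap_rel s 1) T.
Proof.
set e := hmap_rel s 1.
have e_fconnect : subrel (connect e) (fconnect s).
  by apply: connect_sub => x y /orP[] /eqP<-; rewrite ?perm1 // fconnect1.
have -> : porbits s = porbit s @: roots e.
  apply/setP => O; apply/imsetP/imsetP => [[x _ ->]|[r _ ->]]; last by exists r.
  exists (root e x); first by rewrite inE roots_root //; exact: hmap_rel_sym.
  by apply/eqP; rewrite eq_sym eq_porbit_mem porbit_fconnect e_fconnect ?connect_root.
apply: leq_trans (leq_imset_card _ _) _.
by apply: subset_leq_card; apply/subsetP => z; rewrite !inE andbT.
Qed.

Section Unpair.
Variables (s a a' : {perm T}) (x y : T).
Hypotheses (axy : a x = y) (a'x : a' x = x) (a'y : a' y = y)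
  (a'E : forall z, z != x -> z != y -> a' z = a z).
Let e := hmap_rel s a.
Let e' := hmap_rel s a'.

Lemma connect_unpair_sub : subrel (connect e') (connect e).
Proof.
apply: connect_sub => u v /orP[suv|/eqP<-]; first by apply/connect1/orP; left.
have [->|ux] := eqVneq u x; first by rewrite a'x.
have [->|uy] := eqVneq u y; first by rewrite a'y.
by apply: connect1; rewrite /e /hmap_rel /= a'E // eqxx orbT.
Qed.

Lemma connect_unpair_away z :
  ~~ connect e' z x -> ~~ connect e' z y -> connect e z =1 connect e' z.
Proof.
move=> zx zy w; apply/idP/idP => [zw|]; last exact: connect_unpair_sub.
have cl : closed e (connect e' z).
  apply: intro_closed => [|u v euv zu]; first exact: hmap_rel_sym.
  have ux : u != x by apply: contraNneq zx => <-.
  have uy : u != y by apply: contraNneq zy => <-.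
  apply: connect_trans zu (connect1 _).
  case/orP: euv => [suv|/eqP<-]; first by apply/orP; left.
  by rewrite /e' /hmap_rel /= a'E ?eqxx ?orbT.
by have := closed_connect cl zw; rewrite !inE connect0 => <-.
Qed.

Lemma n_comp_hmap_unpair : n_comp e T + ~~ connect e' x y = n_comp e' T.
Proof.
have symE' := hmap_rel_sym s a'.
set C := closure e' (pred2 x y).
have C_pair z : z \notin C -> ~~ connect e' z x && ~~ connect e' z y.
  rewrite -negb_or; apply: contraNN => /orP[zx|zy]; apply/pred0Pn;
    [exists x | exists y]; by rewrite !inE /= ?zx ?zy ?eqxx ?orbT.
have Ceq : closure e (pred2 x y) =i C.
  move=> z; apply/idP/idP; last first.
    case/pred0Pn=> w /andP[/= zw xyw]; apply/pred0Pn; exists w.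
    by rewrite /= xyw andbT; apply: connect_unpair_sub.
  apply: contraLR => zC; apply/pred0Pn => -[w /andP[/= zw xyw]].
  have /andP[zx zy] := C_pair z zC.
  have zw' : connect e' z w by rewrite -(connect_unpair_away zx zy w).
  by move/negP: zC; apply; apply/pred0Pn; exists w; rewrite /= xyw andbT.
rewrite (n_compC C) (n_compC C e').
have -> : n_comp e C = 1.
  rewrite -(eq_n_comp_r Ceq) n_comp_closure2; last exact: hmap_rel_sym.
  by rewrite (connect1 (_ : e x y)) // /e /hmap_rel /= axy eqxx orbT.
rewrite {3}/C (n_comp_closure2 symE').
have -> : n_comp e [predC C] = n_comp e' [predC C].
  apply: eq_card => z; rewrite !inE.
  case zC: (z \in C) => /=; rewrite ?andbF ?andbT //.
  have /andP[zx zy] := C_pair z (negbT zC).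
  by rewrite /roots /root (eq_pick (connect_unpair_away zx zy)).
rewrite /C /e'; lia.
Qed.

End Unpair.

Lemma involution_unpair a x : involutive a -> a x != x ->
  let a' := (tperm x (a x) * a)%g in
  [/\ a' x = x, a' (a x) = a x, (forall z, z != x -> z != a x -> a' z = a z),
      involutive a' & #|[pred z | a' z != z]|.+2 = #|[pred z | a z != z]|].
Proof.
move=> aK ax a'; set y := a x.
have xy : x != y by rewrite eq_sym.
have ay : a y = x by rewrite /y aK.
have a'x : a' x = x by rewrite permM tpermL.
have a'y : a' y = y by rewrite permM tpermR.
have a'E z : z != x -> z != y -> a' z = a z.
  by move=> zx zy; rewrite permM tpermD // eq_sym.
split=> // [z|].
  have [->|zx] := eqVneq z x; first by rewrite !a'x.
  have [->|zy] := eqVneq z y; first by rewrite !a'y.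
  have azx : a z != x by apply: contra_neq zy => azx; rewrite /y -azx aK.
  have azy : a z != y by apply: contra_neq zx => azy; rewrite -(aK z) azy ay.
  by rewrite !a'E ?aK.
rewrite [RHS](cardD1 x) [in RHS](cardD1 y) !inE /= ax ay xy /= add1n add1n; congr _.+2.
apply: eq_card => z; rewrite !inE /=.
have [->|zx] := eqVneq z x; first by rewrite a'x eqxx andbF.
by have [->|zy] := eqVneq z y; rewrite ?a'y ?eqxx ?a'E.
Qed.

(* Nonnegativity of the genus of the map with vertex permutation [s] and edge
   involution [a]; its edges are the [#|[pred x | a x != x]|./2] 2-cycles of [a]. *)
Lemma euler_hmap_le s a : involutive a ->
  #|porbits s| + #|porbits (a * s)|
    <= #|[pred x | a x != x]|./2 + (n_comp (hmap_rel s a) T).*2.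
Proof.
have [K] := ubnP #|[pred x | a x != x]|; elim: K a => // K IHK a ltaK aK.
case: (pickP [pred x | a x != x]) => [x /= ax | fix_a]; last first.
  have -> : a = 1%g by apply/permP => z; rewrite perm1; apply/eqP/negbFE/fix_a.
  apply: leq_trans (leq_addl _ _); rewrite mul1g addnn leq_double.
  exact: card_porbits_le_n_comp.
(* Remove the 2-cycle (x, a x) from a: the faces change by one through
   porbits_mul_tperm and the components by at most one. *)
have [a'x a'y a'E a'K card_a'] := involution_unpair aK ax.
set y := a x in a'y a'E card_a' *.
set a' := (tperm x y * a)%g in a'x a'y a'E a'K card_a' *.
rewrite -card_a' /=.
have lt_a'K : #|[pred z | a' z != z]| < K by move: ltaK; rewrite -card_a'; lia.
have IH := IHK a' lt_a'K a'K.
have -> : (a * s = tperm x y * (a' * s))%g by rewrite !mulgA tperm2 mul1g.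
have := porbits_mul_tperm (a' * s) x y; rewrite /= eq_sym ax.
have := n_comp_hmap_unpair s (erefl y) a'x a'y a'E.
move: IH; rewrite -!muln2.
case: (boolP (x \in porbit (a' * s) y)) => [/connect_hmap_porbit yx | _] /=.
  by rewrite (hmap_rel_sym s a') yx /=; lia.
by case: (connect _ x y) => /=; lia.
Qed.

Lemma n_comp_connect_all (e : rel T) x :
  connect_sym e -> (forall y, connect e x y) -> n_comp e T = 1.
Proof.
move=> sym_e x_all; rewrite -(n_comp_connect sym_e x).
by apply: eq_n_comp_r => y; rewrite !inE; apply/esym/x_all.
Qed.

End EulerInequality.

Section ContourString.
Variables n m : nat.
Local Notation label := ('I_n + 'I_m)%type.
Local Notation letter := (option label).
Implicit Types (x z : label) (pre s post A B : seq label) (o : letter) (X Y : seq letter).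

(* [marks pre s post] is the part of the string c(T) written while the walk
   visits the labels [s], the visits before and after being [pre] and [post]. *)
Definition mark pre x post : seq letter :=
  (if x \notin pre then [:: Some x] else [::]) ++
  (if x \notin post then [:: None] else [::]).

Fixpoint marks pre s post : seq letter :=
  if s is x :: s' then mark pre x (s' ++ post) ++ marks (rcons pre x) s' post else [::].

Lemma marks_nth x0 pre s post :
  flatten [seq mark (pre ++ take p s) (nth x0 s p) (drop p.+1 s ++ post)
          | p <- iota 0 (size s)] = marks pre s post.
Proof.
elim: s pre => [//|x s IHs] pre /=.
rewrite cats0 drop0 -(IHs (rcons pre x)) -[1]addn0 iotaDl -map_comp.
by congr (_ ++ flatten _); apply: eq_map => p /=; rewrite cat_rcons.
Qed.

Lemma marks_cat pre A B post :
  marks pre (A ++ B) post = marks pre A (B ++ post) ++ marks (pre ++ A) B post.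
Proof.
elim: A pre => [|x A IHA] pre /=; first by rewrite cats0.
by rewrite IHA catA cat_rcons catA.
Qed.

Lemma eq_marks pre pre' s post post' :
  {in s, pre =i pre'} -> {in s, post =i post'} ->
  marks pre s post = marks pre' s post'.
Proof.
elim: s pre pre' => [//|x s IHs] pre pre' Epre Epost /=.
rewrite /mark !mem_cat Epre ?Epost ?mem_head //; congr (_ ++ _).
have zxs z : z \in s -> z \in x :: s by rewrite inE => ->; rewrite orbT.
apply: IHs => z /zxs zs; last exact: Epost.
by rewrite !mem_rcons !in_cons Epre.
Qed.

Lemma marks_loop v A B : (forall z, z \in A -> z \in B -> z = v) ->
  marks [::] (v :: A ++ v :: B ++ [:: v]) [::] =
  Some v :: marks [:: v] A [:: v] ++ marks [:: v] B [:: v] ++ [:: None].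
Proof.
move=> AB /=.
rewrite /mark /= !mem_cat !inE eqxx !orbT /= marks_cat /=.
rewrite /mark inE eqxx /= !cats0 mem_cat mem_seq1 eqxx orbT /=.
rewrite marks_cat /= /mark /= inE eqxx /=.
congr (_ :: _ ++ _ ++ _); apply: eq_marks => // z zX.
  rewrite !inE mem_cat mem_seq1.
  by case: (boolP (z \in B)) => [/(AB z zX)->|_]; rewrite ?eqxx //=; case: (z == v).
rewrite !inE mem_rcons inE.
by case: (boolP (z \in A)) => [/AB/(_ zX)->|_]; rewrite ?eqxx //=; case: (z == v).
Qed.

Lemma mem_marks_Some pre s post z :
  Some z \in marks pre s post -> (z \in s) && (z \notin pre).
Proof.
elim: s pre => [//|x s IHs] pre /=; rewrite mem_cat /mark mem_cat => /orP[/orP[]|].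
- by case: ifP => // xpre; rewrite inE => /eqP[->]; rewrite mem_head.
- by case: ifP.
- by move/IHs; rewrite mem_rcons !inE negb_or => /and3P[-> _ ->]; rewrite orbT.
Qed.

Lemma count_Some_marks pre s post :
  count isSome (marks pre s post) = #|[set z in s | z \notin pre]|.
Proof.
elim: s pre => [|x s IHs] pre /=.
  by apply/esym/eqP; rewrite cards_eq0; apply/eqP/setP => z; rewrite !inE.
rewrite count_cat IHs.
have -> : count isSome (mark pre x (s ++ post)) = (x \notin pre).
  by rewrite /mark; case: ifP; case: ifP.
case: (boolP (x \in pre)) => xpre /=.
  apply: eq_card => z; rewrite !inE mem_rcons inE.
  by case: eqP => // ->; rewrite xpre andbF.
rewrite (_ : [set z in x :: s | z \notin pre] = x |: [set z in s | z \notin rcons pre x]).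
  by rewrite cardsU1 !inE mem_rcons mem_head andbF.
by apply/setP => z; rewrite !inE mem_rcons inE; case: eqP => // ->.
Qed.

Lemma count_None_marks pre s post :
  count_mem None (marks pre s post) = #|[set z in s | z \notin post]|.
Proof.
elim: s pre => [|x s IHs] pre /=.
  by apply/esym/eqP; rewrite cards_eq0; apply/eqP/setP => z; rewrite !inE.
rewrite count_cat IHs.
have -> : count_mem None (mark pre x (s ++ post)) = (x \notin s ++ post).
  by rewrite /mark; case: ifP; case: ifP.
rewrite mem_cat negb_or.
case: (boolP (x \in s)) => xs /=.
  by apply: eq_card => z; rewrite !inE; case: eqP => // ->; rewrite xs.
case: (boolP (x \in post)) => xpost /=.
  by apply: eq_card => z; rewrite !inE; case: eqP => // ->; rewrite xpost !andbF.
rewrite (_ : [set z in x :: s | z \notin post] = x |: [set z in s | z \notin post]).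
  by rewrite cardsU1 !inE (negPf xs).
by apply/setP => z; rewrite !inE; case: eqP => // ->.
Qed.

Fixpoint npairs (w : letter -> letter -> nat) X : nat :=
  if X is o :: X' then \sum_(o' <- X') w o o' + npairs w X' else 0.

Definition cross (w : letter -> letter -> nat) X Y : nat :=
  \sum_(o <- X) \sum_(o' <- Y) w o o'.

Lemma count_pairsE f X : count_pairs f X = npairs (fun o o' => f o o') X.
Proof.
elim: X => [|o X IHX]; first by rewrite /count_pairs big_ord0.
rewrite /count_pairs /= big_ord_recl big_ord0 add0n -IHX (big_nth None) big_mkord.
by rewrite -big_split; apply: eq_bigr => i _; rewrite big_ord_recl.
Qed.

Lemma npairsD w1 w2 X :
  npairs (fun o o' => w1 o o' + w2 o o') X = npairs w1 X + npairs w2 X.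
Proof. by elim: X => //= o X ->; rewrite big_split /=; lia. Qed.

Lemma npairs_cat w X Y : npairs w (X ++ Y) = npairs w X + npairs w Y + cross w X Y.
Proof.
elim: X => [|o X IHX] /=; first by rewrite /cross big_nil addn0.
by rewrite IHX /cross big_cons big_cat /=; lia.
Qed.

Lemma cross_catr w X Y Z : cross w X (Y ++ Z) = cross w X Y + cross w X Z.
Proof. by rewrite /cross -big_split; apply: eq_bigr => o _; rewrite big_cat. Qed.

Lemma npairs_swap w o0 o1 X Y :
  npairs w (o0 :: X ++ Y ++ [:: o1]) + cross w Y X =
  npairs w (o0 :: Y ++ X ++ [:: o1]) + cross w X Y.
Proof. by rewrite /= !npairs_cat !cross_catr !big_cat /=; lia. Qed.

Lemma cross_bracket X Y :
  cross (fun o o' => @bracket_label n m o o') X Y =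
  count_mem None X * count isSome Y.
Proof.
rewrite /cross -sum1_count big_distrl [RHS]big_mkcond /=.
apply: eq_bigr => -[x|] _ /=.
  by rewrite big1_eq.
by rewrite mul1n -sum1_count [RHS]big_mkcond; apply: eq_bigr => -[].
Qed.

Definition label_order o o' : nat :=
  @inv_white n m o o' + inv_black o o' + black_white o o'.

Lemma label_order_total o o' : (o = o' -> o = None) ->
  label_order o o' + label_order o' o = isSome o * isSome o'.
Proof.
rewrite /label_order; case: o => [[k|k]|] //; case: o' => [[l|l]|] //= Hkl.
- have : k != l by apply/eqP => kl; move: Hkl; rewrite kl => /(_ erefl).
  by rewrite -val_eqE /=; case: ltngtP.
- have : k != l by apply/eqP => kl; move: Hkl; rewrite kl => /(_ erefl).
  by rewrite -val_eqE /=; case: ltngtP.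
Qed.

Lemma cross_label_order X Y : (forall o, o \in X -> o \in Y -> o = None) ->
  cross label_order X Y + cross label_order Y X = count isSome X * count isSome Y.
Proof.
move=> XY; have count_sum Z : count isSome Z = \sum_(o <- Z) isSome o.
  by rewrite -sum1_count big_mkcond; apply: eq_bigr => -[].
rewrite /cross [in X in _ + X]exchange_big -big_split /= count_sum big_distrl /=.
apply: eq_big_seq => o oX; rewrite -big_split count_sum big_distrr /=.
apply: eq_big_seq => o' o'Y; apply: label_order_total => oo'.
by apply: XY; rewrite // oo'.
Qed.

Lemma npairs_label_order X :
  npairs (fun o o' => @inv_white n m o o') X + npairs (fun o o' => inv_black o o') X
    + npairs (fun o o' => black_white o o') X = npairs label_order X.
Proof. by rewrite !npairsD. Qed.

Definition string_parity X : bool :=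
  odd (count_pairs (@inv_white n m) X + count_pairs (@inv_black n m) X
       + count_pairs (@black_white n m) X
       + (count_pairs (@bracket_label n m) X + (n - m + (m - n))./2)./2).

Lemma string_parity_swap v X Y : (forall o, o \in X -> o \in Y -> o = None) ->
    count_mem None X = count isSome X -> count_mem None Y = count isSome Y ->
    ~~ odd (count isSome X * count isSome Y) ->
  string_parity (Some v :: X ++ Y ++ [:: None]) =
  string_parity (Some v :: Y ++ X ++ [:: None]).
Proof.
move=> XY balX balY evenXY.
rewrite /string_parity !count_pairsE !npairs_label_order.
have := npairs_swap (fun o o' => @bracket_label n m o o') (Some v) None X Y.
rewrite !cross_bracket balX balY mulnC => /addIn ->; rewrite oddD [in RHS]oddD.
congr (_ (+) _); have := npairs_swap label_order (Some v) None X Y.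
have := cross_label_order XY.
move: (cross _ X Y) (cross _ Y X) (npairs _ (_ :: X ++ _)) (npairs _ (_ :: Y ++ _)).
move=> P Q L1 L2 PQ swap; have : L1 + (P + Q) = L2 + P * 2 by lia.
by rewrite PQ => /(congr1 odd); rewrite !oddD (negPf evenXY) oddM andbF !addbF.
Qed.

Lemma string_parity_marks_loop v A B : (forall z, z \in A -> z \in B -> z = v) ->
    ~~ odd (#|[set z in A | z != v]| * #|[set z in B | z != v]|) ->
  string_parity (marks [::] (v :: A ++ v :: B ++ [:: v]) [::]) =
  string_parity (marks [::] (v :: B ++ v :: A ++ [:: v]) [::]).
Proof.
move=> AB evenAB; rewrite !marks_loop // => [|z zB zA]; last exact: AB.
have notin_v s : [set z in s | z \notin [:: v]] = [set z in s | z != v].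
  by apply/setP => z; rewrite !inE.
apply: string_parity_swap; rewrite ?count_None_marks ?count_Some_marks ?notin_v //.
case=> [z|//] /mem_marks_Some/andP[zA zv] /mem_marks_Some/andP[zB _].
by move: zv; rewrite (AB z zA zB) mem_head.
Qed.

Lemma even_card_split v A B : ~~ odd (n + m) ->
    (forall z, z \in A -> z \in B -> z = v) -> (forall z, z \in v :: A ++ B) ->
  ~~ odd (#|[set z in A | z != v]| * #|[set z in B | z != v]|).
Proof.
move=> even_nm AB cover; set SA := [set z in A | _]; set SB := [set z in B | _].
have SAB : SA :|: SB = [set~ v].
  apply/setP => z; rewrite !inE; have [->|zv] := eqVneq z v; first by rewrite !andbF.
  by have := cover z; rewrite inE mem_cat (negPf zv) !andbT.
have SAB0 : SA :&: SB = set0.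
  apply/setP => z; rewrite !inE; apply/negbTE.
  apply/negP => /andP[/andP[zA zv] /andP[zB _]].
  by move: zv; rewrite (AB z zA zB) eqxx.
have card_SAB : n + m = #|SA| + #|SB| + 1.
  have := cardsU SA SB; rewrite SAB SAB0 cards0 subn0 cardsC1 card_sum !card_ord.
  have : 0 < n + m by rewrite -(card_ord n) -(card_ord m) -card_sum; apply/card_gt0P; exists v.
  lia.
by rewrite oddM; apply/negP => /andP[oA oB]; move: even_nm; rewrite card_SAB !oddD oA oB.
Qed.

Lemma iT_marks (D : finType) (sigma alpha : D -> D) (vert : D -> label) d :
  iT sigma alpha vert d = string_parity (marks [::] (walk_visits sigma alpha vert d) [::]).
Proof.
rewrite [LHS]/iT -/(string_parity (cstring sigma alpha vert d)); congr string_parity.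
by rewrite /cstring -(marks_nth (vert d)); congr flatten; apply: eq_map => p; rewrite cats0.
Qed.

End ContourString.

Section PlaneTree.
Variables (n m : nat) (D : finType) (sigma alpha : D -> D) (vert : D -> 'I_n + 'I_m).
Hypotheses (sigma_inj : injective sigma)
  (alpha_invol : forall d, alpha (alpha d) = d /\ alpha d != d)
  (vert_sigma : forall d, vert (sigma d) = vert d)
  (vert_fconnect : forall d d', vert d = vert d' -> fconnect sigma d d')
  (vert_surj : forall x, exists d, vert d = x)
  (connected : forall d d', connect (fun x y => (y == sigma x) || (y == alpha x)) d d')
  (card_vertices : n + m = #|D|./2 + 1).

Let face d := sigma (alpha d).
Local Notation N := #|D|.

Let alphaK : involutive alpha. Proof. by move=> d; case: (alpha_invol d). Qed.
Let sigmaP : {perm D} := perm sigma_inj.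
Let alphaP : {perm D} := perm (can_inj alphaK).
Let faceP : {perm D} := (alphaP * sigmaP)%g.

Let alphaPK : involutive alphaP. Proof. by move=> d; rewrite !permE. Qed.
Let facePE d : faceP d = face d. Proof. by rewrite permM !permE. Qed.

Lemma vert_iter_sigma i d : vert (iter i sigma d) = vert d.
Proof. by elim: i => //= i IHi; rewrite vert_sigma. Qed.

Lemma porbit_sigma d : porbit sigmaP d = [set d' | vert d' == vert d].
Proof.
apply/setP => d'; rewrite porbit_fconnect inE (eq_fconnect (permE sigma_inj)).
apply/idP/eqP => [/iter_findex <-|/esym/vert_fconnect //]; exact: vert_iter_sigma.
Qed.

Lemma card_porbits_sigma : #|porbits sigmaP| = n + m.
Proof.
rewrite /porbits (eq_imset _ porbit_sigma).
rewrite (imset_comp (fun x => [set d' | vert d' == x]) vert) card_in_imset; last first.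
  by move=> x1 x2 /imsetP[d1 _ ->] _ /setP/(_ d1); rewrite !inE eqxx => /esym/eqP.
have -> : vert @: D = [set: 'I_n + 'I_m].
  by apply/setP => x; rewrite inE; have [d <-] := vert_surj x; exact: imset_f.
by rewrite cardsT card_sum !card_ord.
Qed.

Lemma card_moved_alpha : #|[pred d | alphaP d != d]| = N.
Proof. by apply: eq_card => d; rewrite !inE permE; case: (alpha_invol d). Qed.

Lemma connect_tree d d' : connect (hmap_rel sigmaP alphaP) d d'.
Proof.
rewrite (eq_connect (e' := fun x y => (y == sigma x) || (y == alpha x))) //.
by move=> x y; rewrite /hmap_rel /= !permE !(eq_sym y).
Qed.

Lemma fconnect_face d d' : fconnect face d d'.
Proof.
have := euler_hmap_le sigmaP alphaPK.
rewrite card_porbits_sigma card_moved_alpha card_vertices.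
rewrite (n_comp_connect_all (x := d) (hmap_rel_sym _ _) (connect_tree d)) => le_faces.
have /card_le1_eqP one_face : #|porbits faceP| <= 1.
  by move: le_faces; rewrite -/faceP -muln2; lia.
have := one_face (porbit faceP d') (porbit faceP d) (imset_f _ isT) (imset_f _ isT).
move/setP/(_ d'); rewrite porbit_id porbit_fconnect => /esym.
by rewrite (eq_fconnect facePE).
Qed.

Lemma order_face d : fingraph.order face d = N.
Proof. by apply: eq_card => d'; rewrite !inE /= fconnect_face. Qed.

Lemma iter_face_card d : iter N face d = d.
Proof.
by rewrite -(order_face d) (iter_order (inj_comp sigma_inj (can_inj alphaK))).
Qed.

Lemma uniq_walk d : uniq (traject face d N).
Proof. by rewrite -(order_face d) orbit_uniq. Qed.

Lemma mem_walk d d' : d' \in traject face d N.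
Proof. by rewrite -(order_face d) -fconnect_orbit fconnect_face. Qed.

Lemma iter_face_inj d l l' :
  l < N -> l' < N -> iter l face d = iter l' face d -> l = l'.
Proof.
move=> ltlN ltl'N; rewrite -(nth_traject _ ltlN) -(nth_traject _ ltl'N) => /eqP.
by rewrite nth_uniq ?size_traject ?uniq_walk // => /eqP.
Qed.

Lemma card_porbits_split_vertex p q : p != q -> vert p = vert q ->
  #|porbits (tperm p q * sigmaP)| = (n + m).+1.
Proof.
move=> pq vpq; have := porbits_mul_tperm sigmaP p q.
by rewrite porbit_sigma inE vpq eqxx pq card_porbits_sigma /= addn0 addn1.
Qed.

Lemma card_porbits_split_face x y : x != y -> #|porbits (tperm x y * faceP)| = 2.
Proof.
have porbit_faceE z : porbit faceP z = porbit faceP x.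
  apply/eqP; rewrite eq_porbit_mem porbit_fconnect.
  by rewrite (eq_fconnect facePE) fconnect_face.
have card_faces : #|porbits faceP| = 1.
  have -> : porbits faceP = [set porbit faceP x]; last exact: cards1.
  apply/setP => O; rewrite inE.
  by apply/imsetP/eqP => [[z _ ->]|->]; [exact: porbit_faceE | exists x].
move=> xy; have := porbits_mul_tperm faceP x y.
by rewrite porbit_faceE porbit_id xy card_faces /= addn0.
Qed.

Lemma iter_face_cut d k l : 0 < k < N -> l < N ->
  let g := (tperm (iter k.-1 face d) (iter N.-1 face d) * faceP)%g in
  iter l face d = if l < k then iter l g d else iter (l - k) g (iter k face d).
Proof.
move=> /andP[k_gt0 ltkN] + g; elim: l => [|l IHl] ltSlN; first by rewrite k_gt0.
have ltlN : l < N := ltnW ltSlN.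
have gE l' : l' < N -> l' != k.-1 -> l' != N.-1 ->
    g (iter l' face d) = iter l'.+1 face d.
  move=> ltl'N l'k l'N; rewrite permM tpermD ?facePE //.
    by rewrite eq_sym; apply: contra_neq l'k; apply: iter_face_inj; lia.
  by rewrite eq_sym; apply: contra_neq l'N; apply: iter_face_inj; lia.
case: (ltngtP l.+1 k) => [ltSk|ltkS|<-]; rewrite ?ltnn ?subnn //.
  by rewrite (ltnW ltSk) in IHl; rewrite [RHS]iterS -IHl // gE //; lia.
rewrite (ltnNge l k) (ltkS : k <= l) /= in IHl.
by rewrite subSn // [RHS]iterS -IHl // gE //; lia.
Qed.

Lemma walk_return_disjoint d k i j : 0 < k < N -> vert (iter k face d) = vert d ->
    i < k <= j -> j < N -> vert (iter i face d) = vert (iter j face d) ->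
  vert (iter i face d) = vert d.
Proof.
move=> /andP[k_gt0 ltkN] vk /andP[ltik lekj] ltjN vij; apply/eqP/negPn/negP => vi.
set x := iter k.-1 face d; set y := iter N.-1 face d.
have xy : x != y by apply/eqP => /iter_face_inj; lia.
set p := alphaP x; set q := alphaP y.
have vp : vert p = vert d.
  by rewrite -vert_sigma /p permE -[sigma _]/(iter k.-1.+1 face d) prednK.
have vq : vert q = vert d.
  rewrite -vert_sigma /q permE -[sigma _]/(iter N.-1.+1 face d).
  by rewrite prednK ?iter_face_card //; lia.
have pq : p != q by rewrite (inj_eq perm_inj).
pose sigma' : {perm D} := (tperm p q * sigmaP)%g; set e := hmap_rel sigma' alphaP.
have g_face : (alphaP * sigma' = tperm x y * faceP)%g.
  by rewrite /sigma' /p /q -tpermJ conjgE !mulgA mulgV mul1g.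
have := euler_hmap_le sigma' alphaPK.
rewrite g_face card_porbits_split_face // card_porbits_split_vertex ?vp ?vq //.
rewrite card_moved_alpha.
suff -> : n_comp e D = 1 by rewrite card_vertices -!muln2; lia.
have arc l : l < N ->
    connect e (if l < k then d else iter k face d) (iter l face d).
  move=> ltlN; rewrite (@iter_face_cut d k l) ?k_gt0 //; case: ifP => _;
    by apply: connect_hmap_porbit; rewrite g_face -permX mem_porbit.
have sigma_path t : connect e (iter i face d) (iter t sigma (iter i face d)).
  elim: t => // t IHt; apply: connect_trans IHt (connect1 _); apply/orP; left.
  have vt := vert_iter_sigma t (iter i face d).
  rewrite /= permM tpermD ?permE //; apply/eqP => uE;
    by move: vi; rewrite -vt -uE ?vp ?vq eqxx.
have i_j : connect e (iter i face d) (iter j face d).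
  by have := iter_findex (vert_fconnect vij) => <-.
apply: (n_comp_connect_all (x := d) (hmap_rel_sym _ _)) => z.
have /trajectP[l ltlN ->] := mem_walk d z.
have := arc l ltlN; case: ifP => // _; apply: connect_trans.
have := arc i (ltn_trans ltik ltkN); rewrite ltik => /connect_trans; apply.
apply: connect_trans i_j _; rewrite hmap_rel_sym.
by have := arc j ltjN; rewrite ltnNge lekj.
Qed.

Lemma walk_visitsE d :
  walk_visits sigma alpha vert d = rcons (map vert (traject face d N)) (vert d).
Proof.
have map_face x k : map face (traject face x k) = traject face (face x) k.
  by elim: k x => //= k IHk x; rewrite IHk.
rewrite /walk_visits /walk_darts (eq_map (g := vert \o face)) => [|z /=].
  by rewrite map_comp map_face -map_cons -trajectS trajectSr map_rcons iter_face_card.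
by rewrite vert_sigma.
Qed.

Lemma iT_same_root d0 d1 : ~~ odd (n + m) -> vert d0 = vert d1 ->
  iT sigma alpha vert d0 = iT sigma alpha vert d1.
Proof.
move=> even_nm v01; have /trajectP[k ltkN d1E] := mem_walk d0 d1.
have [k0|k_gt0] := posnP k; first by rewrite d1E k0.
set v := vert d0; set P := traject face d0 k; set Q := traject face d1 (N - k).
have walk0 : traject face d0 N = P ++ Q.
  by rewrite /P /Q d1E -trajectD subnKC // ltnW.
have walk1 : traject face d1 N = Q ++ P.
  have d0E : d0 = iter (N - k) face d1.
    by rewrite d1E -iterD subnK ?iter_face_card // ltnW.
  by rewrite /P /Q {1}d0E -trajectD subnK // ltnW.
set A := map vert (traject face (face d0) k.-1).
set B := map vert (traject face (face d1) (N - k).-1).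
have PA : map vert P = v :: A by rewrite /P -(prednK k_gt0).
have QB : map vert Q = v :: B.
  by rewrite /Q -(@prednK (N - k)) /= -?v01 // subn_gt0.
have AB z : z \in A -> z \in B -> z = v.
  case/mapP=> _ /trajectP[a lt_a ->] ->; case/mapP=> _ /trajectP[b lt_b ->].
  rewrite -!iterSr d1E -iterD => vab.
  by apply: (walk_return_disjoint (k := k)) vab;
    [rewrite k_gt0 | rewrite -d1E | lia | lia].
rewrite !iT_marks !walk_visitsE walk0 walk1 -v01 !map_cat PA QB.
rewrite -/v !rcons_cat /= -!cats1 (string_parity_marks_loop AB) //.
apply: even_card_split => // z; have [d <-] := vert_surj z.
have := map_f vert (mem_walk d0 d); rewrite walk0 map_cat PA QB /=.
by rewrite !(mem_cat, inE) => /or4P[] ->; rewrite ?orbT.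
Qed.

End PlaneTree.

Theorem mainTheorem2 (n m : nat) (D : finType) (sigma alpha : D -> D)
    (vert : D -> 'I_n + 'I_m) :
  is_plane_btree sigma alpha vert -> ~~ odd (n + m) ->
  forall (i : 'I_n) (d0 d1 : D), vert d0 = inl i -> vert d1 = inl i ->
  iT sigma alpha vert d0 = iT sigma alpha vert d1.
Proof.
move=> [sigma_inj alpha_invol vert_sigma [vert_fconnect vert_surj _ connected]].
move=> card_vertices even_nm i d0 d1 v0 v1.
apply: (iT_same_root sigma_inj alpha_invol vert_sigma vert_fconnect vert_surj
                      connected card_vertices even_nm).
by rewrite v0 v1.
Qed.
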